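(* Let $\mathcal C$ be a cartesian closed category with regular epi-mono factorizations and $S$ an object of $\mathcal C$ having at least one global element $1\to S$. Then for every $T$-algebra $(X,h)$ of the state monad $T$ on $S$, the morphism $e_X^*:X\to Y^S$ (with $Y=L(X,h)$) has a section.
   Context: $U(X)=X^S$, $F(X)=S\times X$, $F\dashv U$, $T=UF$, $TX=(S\times X)^S$. For $f:S\times X\to Z$, $f^*:X\to Z^S$ is its transpose. $\epsilon$ is the counit (evaluation), $\eta_X=(\mathrm{id}_{S\times X})^*$, $\mu_X=(\epsilon_{S\times X})^S$; $q_X:S\times X\to X$ is the second projection. A $T$-algebra is $(X,h)$, $h:TX\to X$, with $h\circ Th=h\circ\mu_X$, $h\circ\eta_X=\mathrm{id}_X$. For a $T$-algebra $(X,h)$, $f_X=h\circ q_{S\times X}^*:S\times X\to X$ is factored as $f_X=m_X\circ e_X$ with $e_X:S\times X\to Y$ a regular epimorphism and $m_X:Y\to X$ a monomorphism; $Y=L(X,h)$ and $e_X^*:X\to Y^S$ is the transpose of $e_X$. *)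

Set Implicit Arguments.
Unset Strict Implicit.

Record Cat := {
  Ob :> Type;
  Hom : Ob -> Ob -> Type;
  idm : forall A : Ob, Hom A A;
  comp : forall A B C : Ob, Hom B C -> Hom A B -> Hom A C;
  comp_id_l : forall A B (f : Hom A B), comp (idm B) f = f;
  comp_id_r : forall A B (f : Hom A B), comp f (idm A) = f;
  comp_assoc : forall A B C D (f : Hom C D) (g : Hom B C) (k : Hom A B),
      comp f (comp g k) = comp (comp f g) k
}.
Arguments Hom {c} A B.
Arguments idm {c} A.
Arguments comp {c A B C} f g.

(** Cartesian closed categories: terminal object, binary products,
    exponentials [exp S Z = Z^S] with evaluation [ev : S x Z^S -> Z]
    and transpose [curry f : X -> Z^S] for [f : S x X -> Z]. *)
Record CCC := {
  ccat :> Cat;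
  one : ccat;
  to_one : forall A : ccat, Hom A one;
  to_one_unique : forall (A : ccat) (f : Hom A one), f = to_one A;
  prod : ccat -> ccat -> ccat;
  p1 : forall A B : ccat, Hom (prod A B) A;
  p2 : forall A B : ccat, Hom (prod A B) B;
  pair : forall (A B D : ccat), Hom D A -> Hom D B -> Hom D (prod A B);
  pair_p1 : forall A B D (f : Hom D A) (g : Hom D B), comp (p1 A B) (pair f g) = f;
  pair_p2 : forall A B D (f : Hom D A) (g : Hom D B), comp (p2 A B) (pair f g) = g;
  pair_unique : forall A B D (f : Hom D A) (g : Hom D B) (k : Hom D (prod A B)),
      comp (p1 A B) k = f -> comp (p2 A B) k = g -> k = pair f g;
  exp : ccat -> ccat -> ccat;
  ev : forall S Z : ccat, Hom (prod S (exp S Z)) Z;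
  curry : forall (S X Z : ccat), Hom (prod S X) Z -> Hom X (exp S Z);
  curry_ev : forall S X Z (f : Hom (prod S X) Z),
      comp (ev S Z) (pair (p1 S X) (comp (curry f) (p2 S X))) = f;
  curry_unique : forall S X Z (f : Hom (prod S X) Z) (g : Hom X (exp S Z)),
      comp (ev S Z) (pair (p1 S X) (comp g (p2 S X))) = f -> g = curry f
}.
Arguments one {c}.
Arguments prod {c} A B.
Arguments p1 {c} A B.
Arguments p2 {c} A B.
Arguments pair {c A B D} f g.
Arguments exp {c} S Z.
Arguments ev {c} S Z.
Arguments curry {c S X Z} f.

Section Defs.
Variable C : CCC.

Definition mono (A B : C) (m : Hom A B) : Prop :=
  forall (D : C) (x y : Hom D A), comp m x = comp m y -> x = y.

Definition regular_epi (A B : C) (e : Hom A B) : Prop :=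
  exists (D : C) (u v : Hom D A), comp e u = comp e v /\
    forall (E : C) (g : Hom A E), comp g u = comp g v ->
      exists k : Hom B E, comp k e = g /\
        forall k' : Hom B E, comp k' e = g -> k' = k.

Definition has_regepi_mono_factorizations : Prop :=
  forall (A B : C) (f : Hom A B), exists (Y : C) (e : Hom A Y) (m : Hom Y B),
    regular_epi e /\ mono m /\ comp m e = f.

(** The state monad on S: F X = S x X, U X = X^S, T = U F. *)
Variable S : C.

Definition Fmap (A B : C) (g : Hom A B) : Hom (prod S A) (prod S B) :=
  pair (p1 S A) (comp g (p2 S A)).

Definition Umap (A B : C) (g : Hom A B) : Hom (exp S A) (exp S B) :=
  curry (comp g (ev S A)).

Definition T (X : C) : C := exp S (prod S X).
Definition Tmap (A B : C) (g : Hom A B) : Hom (T A) (T B) := Umap (Fmap g).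

Definition eta (X : C) : Hom X (T X) := curry (idm (prod S X)).
Definition mu (X : C) : Hom (T (T X)) (T X) := Umap (ev S (prod S X)).
Definition q (X : C) : Hom (prod S X) X := p2 S X.

Definition is_T_algebra (X : C) (h : Hom (T X) X) : Prop :=
  comp h (Tmap h) = comp h (mu X) /\ comp h (eta X) = idm X.

Definition fX (X : C) (h : Hom (T X) X) : Hom (prod S X) X :=
  comp h (curry (q (prod S X))).

End Defs.

(* Write [f_X (s, x)] for "put the state [s], then return [x]". Associativity of
   [h] gives [f_X (s, h (curry f z)) = f_X (f (s, z))]: putting a state and then
   running a computation is the same as running it at that state.  Hence [f_X] is
   idempotent in the sense [f_X (s, f_X (s', x)) = f_X (s', x)], and through the
   factorization [f_X = m e] (with [e] epi, [m] mono) this yields [e (s, m y) = y].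
   The section of [e^*] then sends [phi : Y^S] to [h (s |-> (s, m (phi s)))]. *)
From Corelib Require Import ssreflect.
Set Implicit Arguments.
Unset Strict Implicit.

Local Infix "∘" := comp (at level 40, left associativity).

Section CartesianClosed.
Variable C : CCC.

Lemma pair_comp (A B D E : C) (a : Hom D A) (b : Hom D B) (k : Hom E D) :
  pair a b ∘ k = pair (a ∘ k) (b ∘ k).
Proof. by apply: pair_unique; rewrite comp_assoc ?pair_p1 ?pair_p2. Qed.

Lemma pair_p1_p2 (A B : C) : pair (p1 A B) (p2 A B) = idm (prod A B).
Proof. by symmetry; apply: pair_unique; apply: comp_id_r. Qed.

Variable S : C.

Lemma p2_Fmap (A B : C) (g : Hom A B) : p2 S B ∘ Fmap S g = g ∘ p2 S A.
Proof. exact: pair_p2. Qed.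

Lemma Fmap_comp (A B D : C) (f : Hom B D) (g : Hom A B) :
  Fmap S (f ∘ g) = Fmap S f ∘ Fmap S g.
Proof. by rewrite /Fmap pair_comp pair_p1 -!comp_assoc pair_p2. Qed.

Lemma ev_Fmap_curry (X Z : C) (f : Hom (prod S X) Z) : ev S Z ∘ Fmap S (curry f) = f.
Proof. exact: curry_ev. Qed.

Lemma curry_comp (X Z W : C) (f : Hom (prod S X) Z) (g : Hom W X) :
  curry f ∘ g = curry (f ∘ Fmap S g).
Proof.
  apply: curry_unique.
  by rewrite -[pair _ _]/(Fmap S _) Fmap_comp comp_assoc ev_Fmap_curry.
Qed.

Lemma Umap_curry (X A B : C) (g : Hom A B) (f : Hom (prod S X) A) :
  Umap S g ∘ curry f = curry (g ∘ f).
Proof. by rewrite /Umap curry_comp -comp_assoc ev_Fmap_curry. Qed.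

Lemma curry_ev_id (Z : C) : curry (ev S Z) = idm (exp S Z).
Proof.
  by symmetry; apply: curry_unique; rewrite comp_id_l pair_p1_p2 comp_id_r.
Qed.

Lemma curry_inj (X Z : C) (a b : Hom (prod S X) Z) : curry a = curry b -> a = b.
Proof. by move=> eq_ab; rewrite -(ev_Fmap_curry a) -(ev_Fmap_curry b) eq_ab. Qed.

Lemma regular_epi_cancel (A B : C) (e : Hom A B) : regular_epi e ->
  forall W (g1 g2 : Hom B W), g1 ∘ e = g2 ∘ e -> g1 = g2.
Proof.
  move=> [D [u [v [euv coeq]]]] W g1 g2 eq_g.
  have [k [_ uniq_k]] : exists k : Hom B W, k ∘ e = g1 ∘ e /\
      forall k', k' ∘ e = g1 ∘ e -> k' = k.
    by apply: coeq; rewrite -!comp_assoc euv.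
  by rewrite (uniq_k g1 eq_refl) (uniq_k g2 (eq_sym eq_g)).
Qed.

(* [S x -] preserves epimorphisms, being a left adjoint. *)
Lemma Fmap_regular_epi_cancel (A B : C) (e : Hom A B) : regular_epi e ->
  forall W (a b : Hom (prod S B) W), a ∘ Fmap S e = b ∘ Fmap S e -> a = b.
Proof.
  move=> e_epi W a b eq_ab; apply: curry_inj; apply: (regular_epi_cancel e_epi).
  by rewrite !curry_comp eq_ab.
Qed.

End CartesianClosed.

Section StateAlgebra.
Variables (C : CCC) (S X : C) (h : Hom (T S X) X).
Hypothesis h_assoc : h ∘ Tmap S h = h ∘ mu S X.

Lemma fX_Fmap_act (Z : C) (f : Hom (prod S Z) (prod S X)) :
  fX h ∘ Fmap S (h ∘ curry f) = fX h ∘ f.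
Proof.
  have const_natural : curry (q S (prod S X)) ∘ Fmap S h
      = Tmap S h ∘ curry (q S (prod S (T S X))).
    by rewrite /Tmap Umap_curry !curry_comp /q !p2_Fmap.
  have mu_const : mu S X ∘ curry (q S (prod S (T S X)))
      = curry (ev S (prod S X) ∘ q S (prod S (T S X))).
    exact: Umap_curry.
  rewrite /fX Fmap_comp comp_assoc -[h ∘ _ ∘ Fmap S h]comp_assoc const_natural.
  rewrite comp_assoc h_assoc -[h ∘ _ ∘ curry _]comp_assoc mu_const.
  rewrite -!comp_assoc !curry_comp; congr (h ∘ curry _).
  by rewrite /q /T -comp_assoc p2_Fmap comp_assoc ev_Fmap_curry p2_Fmap.
Qed.

Lemma fX_Fmap_fX : fX h ∘ Fmap S (fX h) = fX h ∘ p2 S (prod S X).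
Proof. exact: fX_Fmap_act. Qed.

Variables (Y : C) (e : Hom (prod S X) Y) (m : Hom Y X).
Hypotheses (e_regular : regular_epi e) (m_mono : mono m) (fX_factor : m ∘ e = fX h).

Lemma e_Fmap_m : e ∘ Fmap S m = p2 S Y.
Proof.
  apply: (Fmap_regular_epi_cancel e_regular); rewrite p2_Fmap.
  apply: m_mono; rewrite -comp_assoc -Fmap_comp comp_assoc fX_factor.
  by rewrite fX_Fmap_fX -fX_factor -comp_assoc.
Qed.

Lemma curry_factor_section :
  curry e ∘ (h ∘ curry (Fmap S m ∘ pair (p1 S (exp S Y)) (ev S Y))) = idm (exp S Y).
Proof.
  rewrite -(curry_ev_id S Y) curry_comp; congr curry.
  apply: m_mono; rewrite comp_assoc fX_factor fX_Fmap_act -fX_factor.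
  by rewrite -!comp_assoc [e ∘ _]comp_assoc e_Fmap_m pair_p2.
Qed.

End StateAlgebra.

Theorem mainTheorem8 (C : CCC)
  (Hfact : has_regepi_mono_factorizations C)
  (S : C) (s0 : @Hom C one S)
  (X : C) (h : @Hom C (T S X) X) (Halg : is_T_algebra h)
  (Y : C) (e : @Hom C (prod S X) Y) (m : @Hom C Y X)
  (He : regular_epi e) (Hm : mono m) (Hfm : comp m e = fX h) :
  exists s : @Hom C (exp S Y) X, comp (curry e) s = idm (exp S Y).
Proof.
  by eexists; apply: (curry_factor_section (proj1 Halg) He Hm Hfm).
Qed.
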